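(* Let $n$ be a positive integer and, for $k\in\{0,\dots,n-1\}$, let \[ b_k=(-1)^{n-k}\frac{n!}{k!}\binom{2n-k-1}{n-1},\qquad \beta_k=(-1)^{n-1}\frac{(2n-k-1)!}{k!\,(n-k-1)!}. \] Let $\widetilde\Delta(z)=z^n+\sum_{k=0}^{n-1}b_kz^k+e^{-z}\sum_{k=0}^{n-1}\beta_kz^k$. Then, for every $z\in\mathbb C$, \[ \widetilde\Delta(z)=\frac{z^{2n}}{(n-1)!}\int_0^1t^{n-1}(1-t)^ne^{-zt}\,dt. \] *)

From Stdlib Require Export Reals Factorial Binomial.
From Coquelicot Require Export Coquelicot.

Definition cexp (z : C) : C :=
  (exp (Re z) * cos (Im z), exp (Re z) * sin (Im z))%R.

Definition cpow (z : C) (m : nat) : C := pow_n (K := C_Ring) z m.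

Definition bcoef (n k : nat) : R :=
  ((-1) ^ (n - k) * INR (fact n) / INR (fact k)
     * Binomial.C (2 * n - k - 1) (n - 1))%R.

Definition betacoef (n k : nat) : R :=
  ((-1) ^ (n - 1) * INR (fact (2 * n - k - 1))
     / (INR (fact k) * INR (fact (n - k - 1))))%R.

Fixpoint csum (f : nat -> C) (n : nat) : C :=
  match n with
  | O => RtoC 0
  | S m => Cplus (csum f m) (f m)
  end.

Definition DeltaT (n : nat) (z : C) : C :=
  Cplus (Cplus (cpow z n) (csum (fun k => Cmult (RtoC (bcoef n k)) (cpow z k)) n))
        (Cmult (cexp (Copp z))
               (csum (fun k => Cmult (RtoC (betacoef n k)) (cpow z k)) n)).

From Stdlib Require Import Lra Lia.

(* Hermite's integration by parts: if the m-th derivative of p vanishes, then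
   t |-> - e^(-zt) sum_(k<m) z^k p^(m-1-k)(t) is an antiderivative of z^m p(t) e^(-zt), so
     z^m int_0^1 p(t) e^(-zt) dt = sum_(k<m) z^k (p^(m-1-k)(0) - e^(-z) p^(m-1-k)(1)).
   Apply this to p(t) = t^(n-1) (1-t)^n with m = 2n.  Expanding p in powers of t and of
   t - 1 gives its derivatives at 0 and 1: p vanishes to order n - 1 at 0 and to order n
   at 1, and the remaining derivatives are (n-1)! times 1, b_k and -beta_k. *)

Local Notation CR := C_R_NormedModule.

(* [ring] only recognises an equation once it is stated in [C] rather than in the
   carrier of a normed module. *)
Local Ltac Cring := match goal with |- @eq _ ?u ?v => change (@eq C u v) end; ring.

Lemma is_derive_C_pair (f g : R -> R) (x f' g' : R) :
  is_derive f x f' -> is_derive g x g' ->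
  is_derive (V := CR) (fun t => (f t, g t) : C) x ((f', g') : C).
Proof.
  intros Hf Hg.
  assert (Hpair : forall u v : R, ((u, v) : C) = Cplus (scal u (1, 0)) (scal v (0, 1))).
  { intros u v. rewrite !scal_R_Cmult. apply injective_projections; simpl; ring. }
  rewrite (Hpair f' g').
  apply (is_derive_ext (V := CR)
           (fun t => plus (scal (f t) ((1, 0) : C)) (scal (g t) ((0, 1) : C)))).
  { intros t. symmetry. apply Hpair. }
  apply (is_derive_plus (V := CR)); apply (is_derive_scal_l (V := CR)); assumption.
Qed.

Lemma is_derive_cexp_mul (w : C) (x : R) :
  is_derive (V := CR) (fun t => cexp (w * t)) x (w * cexp (w * x))%C.
Proof.
  destruct w as [a b].
  apply (is_derive_ext (V := CR)
           (fun t => (exp (a * t) * cos (b * t), exp (a * t) * sin (b * t))%R : C)).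
  { intros t. unfold cexp; simpl. now rewrite !Rmult_0_r, Rminus_0_r, Rplus_0_l. }
  assert (Hl : ((a, b) * cexp ((a, b) * x))%C =
    (((a * exp (a * x)) * cos (b * x) - exp (a * x) * (b * sin (b * x)))%R,
     ((a * exp (a * x)) * sin (b * x) + exp (a * x) * (b * cos (b * x)))%R)).
  { unfold cexp; simpl. rewrite !Rmult_0_r, Rminus_0_r, Rplus_0_l.
    apply injective_projections; simpl; ring. }
  rewrite Hl.
  apply is_derive_C_pair; auto_derive; auto; ring.
Qed.

Lemma is_linear_Cmult_l (c : C) : is_linear (U := CR) (V := CR) (Cmult c).
Proof.
  split.
  - intros u v. apply Cmult_plus_distr_l.
  - intros k u. rewrite !scal_R_Cmult. change (c * (k * u) = k * (c * u))%C. ring.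
  - exists (Cmod c + 1)%R. split.
    + pose proof (Cmod_ge_0 c). lra.
    + intros u. rewrite <- !Cmod_norm, Cmod_mult.
      pose proof (Cmod_ge_0 u). pose proof (Cmod_ge_0 c). nra.
Qed.

Lemma is_derive_Cmult_l (c : C) (f : R -> C) (x : R) (l : C) :
  is_derive (V := CR) f x l -> is_derive (V := CR) (fun t => c * f t)%C x (c * l)%C.
Proof.
  intros Hf.
  eapply filterdiff_ext_lin.
  - exact (filterdiff_comp _ _ _ _ Hf
             (filterdiff_linear (U := CR) (V := CR) _ (is_linear_Cmult_l c))).
  - intros y. simpl. rewrite !scal_R_Cmult. change (c * (y * l) = y * (c * l))%C. ring.
Qed.

Lemma is_derive_RtoC_mult (f : R -> R) (g : R -> C) (x f' : R) (g' : C) :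
  is_derive f x f' -> is_derive (V := CR) g x g' ->
  is_derive (V := CR) (fun t => f t * g t)%C x (f' * g x + f x * g')%C.
Proof.
  intros Hf Hg.
  eapply filterdiff_ext.
  2: eapply filterdiff_ext_lin.
  2: exact (filterdiff_scal_fct (V := CR) x f g _ _ Rmult_comm Hf Hg).
  - intros t. apply scal_R_Cmult.
  - intros y. simpl. rewrite !scal_R_Cmult.
    change (scal y f') with (y * f')%R. rewrite RtoC_mult.
    change (Cplus (y * f' * g x) (f x * (y * g')) = y * (f' * g x + f x * g'))%C. ring.
Qed.

Lemma is_RInt_Cmult_l (c : C) (f : R -> C) (a b : R) (I : C) :
  is_RInt (V := CR) f a b I -> is_RInt (V := CR) (fun t => c * f t)%C a b (c * I)%C.
Proof.
  intros HI.
  pose proof (is_RInt_fct_extend_fst (U := R_NormedModule) (V := R_NormedModule) f a b I HI) as Hre.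
  pose proof (is_RInt_fct_extend_snd (U := R_NormedModule) (V := R_NormedModule) f a b I HI) as Him.
  destruct c as [c1 c2].
  apply (is_RInt_fct_extend_pair (U := R_NormedModule) (V := R_NormedModule)).
  - apply (is_RInt_ext (fun t => c1 * fst (f t) - c2 * snd (f t)))%R; [intros; simpl; ring |].
    exact (is_RInt_minus _ _ a b _ _ (is_RInt_scal _ a b c1 _ Hre) (is_RInt_scal _ a b c2 _ Him)).
  - apply (is_RInt_ext (fun t => c1 * snd (f t) + c2 * fst (f t)))%R; [intros; simpl; ring |].
    exact (is_RInt_plus _ _ a b _ _ (is_RInt_scal _ a b c1 _ Him) (is_RInt_scal _ a b c2 _ Hre)).
Qed.

Lemma csum_ext (f g : nat -> C) (m : nat) :
  (forall k, (k < m)%nat -> f k = g k) -> csum f m = csum g m.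
Proof.
  induction m as [| m IH]; intros Hfg; simpl; [reflexivity |].
  rewrite IH by (intros; apply Hfg; lia). rewrite Hfg by lia. reflexivity.
Qed.

Lemma csum_eq0 (f : nat -> C) (m : nat) :
  (forall k, (k < m)%nat -> f k = 0%R) -> csum f m = 0%R.
Proof.
  induction m as [| m IH]; intros Hf; simpl; [reflexivity |].
  rewrite IH by (intros; apply Hf; lia). rewrite Hf by lia. apply Cplus_0_l.
Qed.

Lemma csum_mult_l (c : C) (f : nat -> C) (m : nat) :
  csum (fun k => c * f k)%C m = (c * csum f m)%C.
Proof. induction m as [| m IH]; simpl; [ring | rewrite IH; ring]. Qed.

Lemma csum_S_l (f : nat -> C) (m : nat) :
  csum f (S m) = (f O + csum (fun k => f (S k)) m)%C.
Proof. induction m as [| m IH]; simpl in *; [ring | rewrite IH; ring]. Qed.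

Lemma csum_split (f : nat -> C) (m a b : nat) :
  m = (a + b)%nat -> csum f m = (csum f a + csum (fun i => f (a + i)%nat) b)%C.
Proof.
  intros ->. induction b as [| b IH]; simpl.
  - rewrite Nat.add_0_r. ring.
  - rewrite Nat.add_succ_r. simpl. rewrite IH. ring.
Qed.

Lemma cexp_0 : cexp 0%R = 1%R.
Proof.
  unfold cexp; simpl. rewrite exp_0, cos_0, sin_0.
  apply injective_projections; simpl; ring.
Qed.

Section Hermite.

Variable p : R -> R.
Hypothesis p_smooth : forall k t, ex_derive_n p k t.
Variable z : C.

Lemma is_derive_Derive_n (k : nat) (t : R) :
  is_derive (Derive_n p k) t (Derive_n p (S k) t).
Proof. exact (Derive_correct _ _ (p_smooth (S k) t)). Qed.

Lemma is_derive_cexp_neg_mul (t : R) :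
  is_derive (V := CR) (fun s => cexp (- (z * s)))%C t (- z * cexp (- (z * t)))%C.
Proof.
  replace (- (z * t))%C with (- z * t)%C by ring.
  apply (is_derive_ext (V := CR) (fun s => cexp (- z * s))%C).
  { intros s. f_equal. ring. }
  apply is_derive_cexp_mul.
Qed.

Definition hermite_sum (m : nat) (t : R) : C :=
  csum (fun k => cpow z k * Derive_n p (m - 1 - k) t)%C m.

Lemma hermite_sum_S (m : nat) (t : R) :
  hermite_sum (S m) t = (Derive_n p m t + z * hermite_sum m t)%C.
Proof.
  unfold hermite_sum. rewrite csum_S_l, <- csum_mult_l.
  replace (S m - 1 - 0)%nat with m by lia.
  f_equal; [change (cpow z 0) with (RtoC 1); ring |].
  apply csum_ext. intros k Hk.
  replace (S m - 1 - S k)%nat with (m - 1 - k)%nat by lia.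
  change (cpow z (S k)) with (z * cpow z k)%C. ring.
Qed.

Lemma is_derive_hermite_antiderivative (m : nat) (t : R) :
  is_derive (V := CR) (fun s => - (cexp (- (z * s)) * hermite_sum m s))%C t
    (cexp (- (z * t)) * (cpow z m * p t - Derive_n p m t))%C.
Proof.
  revert t. induction m as [| m IH]; intros t.
  - replace (cexp (- (z * t)) * (cpow z 0 * p t - Derive_n p 0 t))%C with (RtoC 0)
      by (change (cpow z 0) with (RtoC 1); simpl; ring).
    apply (is_derive_ext (V := CR) (fun _ => RtoC 0)).
    { intros s. unfold hermite_sum; simpl. Cring. }
    apply (is_derive_const (V := CR)).
  - apply (is_derive_ext (V := CR) (fun s =>
      - (Derive_n p m s * cexp (- (z * s))) + z * - (cexp (- (z * s)) * hermite_sum m s))%C).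
    { intros s. rewrite hermite_sum_S. Cring. }
    replace (cexp (- (z * t)) * (cpow z (S m) * p t - Derive_n p (S m) t))%C with
      (- (Derive_n p (S m) t * cexp (- (z * t)) + Derive_n p m t * (- z * cexp (- (z * t))))
       + z * (cexp (- (z * t)) * (cpow z m * p t - Derive_n p m t)))%C
      by (change (cpow z (S m)) with (z * cpow z m)%C; ring).
    apply (is_derive_plus (V := CR)).
    + apply (is_derive_opp (V := CR)).
      exact (is_derive_RtoC_mult _ _ _ _ _ (is_derive_Derive_n m t) (is_derive_cexp_neg_mul t)).
    + exact (is_derive_Cmult_l z _ _ _ (IH t)).
Qed.

Theorem hermite_identity (m : nat) :
  (forall t, Derive_n p m t = 0%R) ->
  (cpow z m * RInt (V := C_R_CompleteNormedModule) (fun t => p t * cexp (- (z * t)))%C 0 1)%C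
  = (hermite_sum m 0 - cexp (- z) * hermite_sum m 1)%C.
Proof.
  intros Hm.
  set (g := fun t => (p t * cexp (- (z * t)))%C).
  assert (Hg : forall t, ex_derive (V := CR) g t).
  { intros t. eexists.
    exact (is_derive_RtoC_mult _ _ _ _ _ (is_derive_Derive_n 0 t) (is_derive_cexp_neg_mul t)). }
  set (F := fun s : R => (- (cexp (- (z * s)) * hermite_sum m s))%C).
  assert (Hftc : is_RInt (V := CR) (fun t => cpow z m * g t)%C 0 1 (minus (F 1) (F 0))).
  { apply (is_RInt_derive (V := C_R_CompleteNormedModule) F).
    - intros t _. unfold g.
      replace (cpow z m * (p t * cexp (- (z * t))))%C
        with (cexp (- (z * t)) * (cpow z m * p t - Derive_n p m t))%C
        by (rewrite Hm; ring).
      apply is_derive_hermite_antiderivative.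
    - intros t _. apply (ex_derive_continuous (V := CR)).
      destruct (Hg t) as [l Hl]. eexists. exact (is_derive_Cmult_l _ _ _ _ Hl). }
  assert (Hint : ex_RInt (V := C_R_CompleteNormedModule) g 0 1).
  { apply (ex_RInt_continuous (V := C_R_CompleteNormedModule)). intros t _.
    apply (ex_derive_continuous (V := CR)). apply Hg. }
  rewrite <- (is_RInt_unique (V := C_R_CompleteNormedModule) _ _ _ _
                (is_RInt_Cmult_l (cpow z m) _ _ _ _ (RInt_correct _ _ _ Hint))).
  rewrite (is_RInt_unique (V := C_R_CompleteNormedModule) _ _ _ _ Hftc).
  unfold F. replace (- (z * 0))%C with (RtoC 0) by ring. replace (- (z * 1))%C with (- z)%C by ring.
  rewrite cexp_0. change (minus ?u ?v) with (u - v)%C. ring.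
Qed.

End Hermite.

Lemma sum_n_eq0 (u : nat -> R) (N : nat) :
  (forall i, (i <= N)%nat -> u i = 0%R) -> sum_n u N = 0%R.
Proof.
  intros Hu. rewrite (sum_n_ext_loc u (fun _ => 0%R)) by exact Hu.
  rewrite sum_n_const. apply Rmult_0_r.
Qed.

Lemma sum_n_single (u : nat -> R) (m N : nat) :
  (m <= N)%nat -> (forall i, i <> m -> u i = 0%R) -> sum_n u N = u m.
Proof.
  intros HmN Hu. induction N as [| N IH].
  - replace m with O by lia. apply sum_O.
  - rewrite sum_Sn. destruct (Nat.eq_dec m (S N)) as [-> | Hm].
    + rewrite sum_n_eq0 by (intros i Hi; apply Hu; lia). apply Rplus_0_l.
    + rewrite IH, (Hu (S N)) by lia. apply Rplus_0_r.
Qed.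

Lemma Derive_n_pow_0 (e k : nat) :
  Derive_n (fun y => y ^ e) k 0 = if Nat.eqb k e then INR (fact k) else 0%R.
Proof.
  rewrite Derive_n_pow.
  destruct (Compare_dec.le_dec k e) as [Hle | Hgt];
    destruct (Nat.eqb_spec k e) as [<- | Hne]; try lia.
  - rewrite Nat.sub_diag. simpl. field.
  - rewrite pow_i by lia. ring.
  - reflexivity.
Qed.

Definition monomial_sum (c : nat -> R) (s N : nat) (x : R) : R :=
  sum_n (fun i => c i * x ^ (s + i))%R N.

Lemma ex_derive_n_monomial_sum (c : nat -> R) (s N k : nat) (x : R) :
  ex_derive_n (monomial_sum c s N) k x.
Proof.
  apply ex_derive_n_sum_n, filter_forall. intros t i j _ _.
  apply ex_derive_n_scal_l, ex_derive_n_pow.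
Qed.

Lemma Derive_n_monomial_sum (c : nat -> R) (s N k : nat) (x : R) :
  Derive_n (monomial_sum c s N) k x
  = sum_n (fun i => c i * Derive_n (fun y => y ^ (s + i)) k x)%R N.
Proof.
  unfold monomial_sum. rewrite Derive_n_sum_n.
  - apply sum_n_ext. intros i. apply Derive_n_scal_l.
  - apply filter_forall. intros t i j _ _. apply ex_derive_n_scal_l, ex_derive_n_pow.
Qed.

Lemma Derive_n_monomial_sum_0_lt (c : nat -> R) (s N k : nat) :
  (k < s)%nat -> Derive_n (monomial_sum c s N) k 0 = 0%R.
Proof.
  intros Hk. rewrite Derive_n_monomial_sum. apply sum_n_eq0. intros i _.
  rewrite Derive_n_pow_0, (proj2 (Nat.eqb_neq _ _)) by lia. ring.
Qed.

Lemma Derive_n_monomial_sum_0 (c : nat -> R) (s N m : nat) :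
  (m <= N)%nat -> Derive_n (monomial_sum c s N) (s + m) 0 = (INR (fact (s + m)) * c m)%R.
Proof.
  intros Hm. rewrite Derive_n_monomial_sum, (sum_n_single _ m); [| exact Hm |].
  - rewrite Derive_n_pow_0, Nat.eqb_refl. ring.
  - intros i Hi. rewrite Derive_n_pow_0, (proj2 (Nat.eqb_neq _ _)) by lia. ring.
Qed.

Lemma Derive_n_monomial_sum_gt (c : nat -> R) (s N k : nat) (x : R) :
  (s + N < k)%nat -> Derive_n (monomial_sum c s N) k x = 0%R.
Proof.
  intros Hk. rewrite Derive_n_monomial_sum. apply sum_n_eq0. intros i Hi.
  rewrite Derive_n_pow_bigi by lia. ring.
Qed.

Definition beta_poly (n : nat) (t : R) : R := (t ^ (n - 1) * (1 - t) ^ n)%R.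

Lemma beta_poly_expand_0 (n : nat) (t : R) :
  beta_poly n t = monomial_sum (fun i => Binomial.C n i * (-1) ^ i)%R (n - 1) n t.
Proof.
  unfold beta_poly, monomial_sum. rewrite sum_n_Reals.
  replace (1 - t)%R with (- t + 1)%R by ring. rewrite binomial, scal_sum.
  apply sum_eq. intros i _.
  rewrite pow1, pow_add. replace (- t)%R with (-1 * t)%R by ring.
  rewrite Rpow_mult_distr. ring.
Qed.

Lemma beta_poly_expand_1 (n : nat) (t : R) :
  beta_poly n t = monomial_sum (fun i => (-1) ^ n * Binomial.C (n - 1) i)%R n (n - 1) (t - 1).
Proof.
  unfold beta_poly, monomial_sum. rewrite sum_n_Reals.
  replace t with ((t - 1) + 1)%R at 1 by ring.
  replace (1 - t)%R with (-1 * (t - 1))%R by ring.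
  rewrite binomial, Rpow_mult_distr, (Rmult_comm (sum_f_R0 _ _)), scal_sum.
  apply sum_eq. intros i _. rewrite pow1, pow_add. ring.
Qed.

Lemma ex_derive_n_beta_poly (n k : nat) (t : R) : ex_derive_n (beta_poly n) k t.
Proof.
  apply (ex_derive_n_ext (monomial_sum (fun i => Binomial.C n i * (-1) ^ i)%R (n - 1) n)).
  - intros s. symmetry. apply beta_poly_expand_0.
  - apply ex_derive_n_monomial_sum.
Qed.

Lemma Derive_n_beta_poly_gt (n k : nat) (t : R) :
  (2 * n - 1 < k)%nat -> Derive_n (beta_poly n) k t = 0%R.
Proof.
  intros Hk. rewrite (Derive_n_ext _ _ _ _ (beta_poly_expand_0 n)).
  apply Derive_n_monomial_sum_gt. lia.
Qed.

Lemma Derive_n_beta_poly_0_lt (n k : nat) :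
  (k < n - 1)%nat -> Derive_n (beta_poly n) k 0 = 0%R.
Proof.
  intros Hk. rewrite (Derive_n_ext _ _ _ _ (beta_poly_expand_0 n)).
  exact (Derive_n_monomial_sum_0_lt _ _ _ _ Hk).
Qed.

Lemma Derive_n_beta_poly_0 (n m : nat) :
  (m <= n)%nat ->
  Derive_n (beta_poly n) (n - 1 + m) 0 = (INR (fact (n - 1 + m)) * (Binomial.C n m * (-1) ^ m))%R.
Proof.
  intros Hm. rewrite (Derive_n_ext _ _ _ _ (beta_poly_expand_0 n)).
  exact (Derive_n_monomial_sum_0 _ _ _ _ Hm).
Qed.

Lemma Derive_n_beta_poly_at_1 (n k : nat) :
  Derive_n (beta_poly n) k 1
  = Derive_n (monomial_sum (fun i => (-1) ^ n * Binomial.C (n - 1) i)%R n (n - 1)) k 0.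
Proof.
  rewrite (Derive_n_ext (beta_poly n)
    (fun t => monomial_sum (fun i => (-1) ^ n * Binomial.C (n - 1) i)%R n (n - 1) (t + -1))).
  - rewrite Derive_n_comp_trans. f_equal. ring.
  - intros t. apply beta_poly_expand_1.
Qed.

Lemma Derive_n_beta_poly_1_lt (n k : nat) :
  (k < n)%nat -> Derive_n (beta_poly n) k 1 = 0%R.
Proof.
  intros Hk. rewrite Derive_n_beta_poly_at_1.
  exact (Derive_n_monomial_sum_0_lt _ _ _ _ Hk).
Qed.

Lemma Derive_n_beta_poly_1 (n m : nat) :
  (m <= n - 1)%nat ->
  Derive_n (beta_poly n) (n + m) 1 = (INR (fact (n + m)) * ((-1) ^ n * Binomial.C (n - 1) m))%R.
Proof.
  intros Hm. rewrite Derive_n_beta_poly_at_1.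
  exact (Derive_n_monomial_sum_0 _ _ _ _ Hm).
Qed.

Lemma Derive_n_beta_poly_0_order (n : nat) :
  Derive_n (beta_poly n) (n - 1) 0 = INR (fact (n - 1)).
Proof.
  rewrite <- (Nat.add_0_r (n - 1)), Derive_n_beta_poly_0 by lia.
  unfold Binomial.C. rewrite Nat.sub_0_r. simpl. field. apply INR_fact_neq_0.
Qed.

Lemma Derive_n_beta_poly_0_bcoef (n k : nat) :
  (k < n)%nat -> Derive_n (beta_poly n) (2 * n - 1 - k) 0 = (INR (fact (n - 1)) * bcoef n k)%R.
Proof.
  intros Hk. replace (2 * n - 1 - k)%nat with (n - 1 + (n - k))%nat by lia.
  rewrite Derive_n_beta_poly_0 by lia.
  unfold bcoef, Binomial.C.
  replace (n - (n - k))%nat with k by lia.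
  replace (2 * n - k - 1 - (n - 1))%nat with (n - k)%nat by lia.
  replace (2 * n - k - 1)%nat with (n - 1 + (n - k))%nat by lia.
  field. repeat split; apply INR_fact_neq_0.
Qed.

Lemma Derive_n_beta_poly_1_betacoef (n k : nat) :
  (k < n)%nat ->
  Derive_n (beta_poly n) (2 * n - 1 - k) 1 = (- (INR (fact (n - 1)) * betacoef n k))%R.
Proof.
  intros Hk. replace (2 * n - 1 - k)%nat with (n + (n - 1 - k))%nat by lia.
  rewrite Derive_n_beta_poly_1 by lia.
  unfold betacoef, Binomial.C.
  replace (n - 1 - (n - 1 - k))%nat with k by lia.
  replace (n - k - 1)%nat with (n - 1 - k)%nat by lia.
  replace (2 * n - k - 1)%nat with (n + (n - 1 - k))%nat by lia.
  assert (Hsign : ((-1) ^ n = - (-1) ^ (n - 1))%R).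
  { replace n with (S (n - 1)) at 1 by lia. simpl. ring. }
  rewrite Hsign. field. repeat split; apply INR_fact_neq_0.
Qed.

Lemma hermite_sum_beta_poly_0 (n : nat) (z : C) :
  (0 < n)%nat ->
  hermite_sum (beta_poly n) z (2 * n) 0
  = (INR (fact (n - 1)) * (cpow z n + csum (fun k => bcoef n k * cpow z k) n))%C.
Proof.
  intros hn. unfold hermite_sum.
  rewrite (csum_split _ _ n (S (n - 1))) by lia.
  rewrite csum_S_l, (csum_eq0 _ (n - 1)).
  - rewrite (csum_ext _ (fun k => INR (fact (n - 1)) * (bcoef n k * cpow z k))%C).
    + replace (2 * n - 1 - (n + 0))%nat with (n - 1)%nat by lia.
      rewrite csum_mult_l, Derive_n_beta_poly_0_order, Nat.add_0_r. ring.
    + intros k Hk. rewrite Derive_n_beta_poly_0_bcoef, RtoC_mult by lia. ring.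
  - intros i Hi.
    rewrite Derive_n_beta_poly_0_lt by lia. ring.
Qed.

Lemma hermite_sum_beta_poly_1 (n : nat) (z : C) :
  (0 < n)%nat ->
  hermite_sum (beta_poly n) z (2 * n) 1
  = (- (INR (fact (n - 1)) * csum (fun k => betacoef n k * cpow z k) n))%C.
Proof.
  intros hn. unfold hermite_sum.
  rewrite (csum_split _ _ n n) by lia.
  rewrite (csum_eq0 (fun i => cpow z (n + i) * Derive_n (beta_poly n) (2 * n - 1 - (n + i)) 1)%C n)
    by (intros i Hi; rewrite Derive_n_beta_poly_1_lt by lia; ring).
  rewrite (csum_ext _ (fun k => - INR (fact (n - 1)) * (betacoef n k * cpow z k))%C).
  - rewrite csum_mult_l. ring.
  - intros k Hk. rewrite Derive_n_beta_poly_1_betacoef, RtoC_opp, RtoC_mult by lia. ring.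
Qed.

Theorem lemma4p5 (n : nat) (hn : (0 < n)%nat) (z : C) :
  DeltaT n z =
  Cmult (Cdiv (cpow z (2 * n)) (RtoC (INR (fact (n - 1)))))
        (RInt (V := C_R_CompleteNormedModule)
           (fun t : R => Cmult (RtoC (t ^ (n - 1) * (1 - t) ^ n)%R)
                               (cexp (Copp (Cmult z (RtoC t)))))
           0 1).
Proof.
  pose proof (hermite_identity (beta_poly n) (ex_derive_n_beta_poly n) z (2 * n)
                (fun t => Derive_n_beta_poly_gt n (2 * n) t ltac:(lia))) as Hermite.
  rewrite hermite_sum_beta_poly_0, hermite_sum_beta_poly_1 in Hermite by exact hn.
  unfold beta_poly in Hermite.
  set (I := RInt _ 0 1) in *.
  assert (Hfact : RtoC (INR (fact (n - 1))) <> RtoC 0).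
  { intros H. apply (INR_fact_neq_0 (n - 1)). exact (f_equal fst H). }
  transitivity (cpow z (2 * n) * I / INR (fact (n - 1)))%C.
  - rewrite Hermite. unfold DeltaT. field. exact Hfact.
  - unfold Cdiv. ring.
Qed.
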